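(* Suppose $d\ge9$ and $k$ is an integer with $\frac d2+1<k\le\frac{2d}3$. If $x\ge\frac{5k-2d}{d-k}$, then $(x+1)f'(x)<k\,f(x)$.
   Context: $f(x)=\binom dk^{-1}\sum_{i=0}^{d-k}\binom ki\binom{d-k}{i}x^{k-i}$ (the probability generating function of the hypergeometric distribution with parameters $(d,k,k)$). *)

From HB Require Import structures.
From mathcomp Require Import all_boot all_order all_algebra.
Set Implicit Arguments. Unset Strict Implicit. Unset Printing Implicit Defensive.
Import Order.TTheory GRing.Theory Num.Theory.
Local Open Scope ring_scope.

(* Probability generating function of the hypergeometric distribution with
   parameters (d,k,k):
   f(x) = C(d,k)^{-1} * sum_{i=0}^{d-k} C(k,i) C(d-k,i) x^{k-i}. *)
Definition hyp_pgf (R : fieldType) (d k : nat) : {poly R} :=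
  ('C(d, k)%:R)^-1 *:
    \sum_(i < (d - k).+1) (('C(k, i) * 'C(d - k, i))%:R *: 'X^(k - i)).

From HB Require Import structures.
From mathcomp Require Import all_boot all_order all_algebra.
From mathcomp Require Import ring lra zify.
Import Order.TTheory GRing.Theory Num.Theory.
Local Open Scope ring_scope.
Set Implicit Arguments. Unset Strict Implicit. Unset Printing Implicit Defensive.

(* Write m = d - k and W_i = C(k,i) C(m,i) x^(k-i), so that C(d,k) f(x) is the
   sum of the W_i and x (k f(x) - (x+1) f'(x)) is C(d,k)^-1 times
   sum_i W_i (i (x+1) - k).  The weights satisfy the hypergeometric recurrence
   (i+1)^2 x W_(i+1) = (k-i)(m-i) W_i, so for any sequence T the sum
   sum_i W_i ((k-i)(m-i)/(i+1) T_(i+1) - x i T_i) telescopes to zero.  Adding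
   it to the sum to be shown positive, the term of index i becomes W_i N_i/(i+1)
   for an explicit N_i, and with T_i = (x-1) m + 2 i each N_i is a quadratic
   in y = m (x-1) - 3 (k-m) with coefficients that are nonnegative when
   3 <= k - m <= m; the hypothesis on x is exactly y >= 0.  The case m = 3
   (which forces k = 6) is checked by hand. *)

Ltac nonneg_poly := repeat first
  [ assumption | apply: ler0n | apply: exprn_ge0 | apply: mulr_ge0 | apply: addr_ge0 ].

Section HypergeometricWeights.

Variable R : realFieldType.
Implicit Types (x : R) (T : nat -> R).

Definition hyp_weight x (k m i : nat) : R :=
  ('C(k, i) * 'C(m, i))%:R * x ^+ (k - i).

Lemma hyp_weight_ge0 x k m i : 0 <= x -> 0 <= hyp_weight x k m i.
Proof. by move=> x_ge0; rewrite mulr_ge0 ?exprn_ge0. Qed.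

Lemma hyp_weight_recurrence x k m i : (i < m)%N -> (m <= k)%N ->
  x * i.+1%:R * hyp_weight x k m i.+1
  = (k%:R - i%:R) * (m%:R - i%:R) / i.+1%:R * hyp_weight x k m i.
Proof.
move=> lt_im le_mk; have lt_ik : (i < k)%N := leq_trans lt_im le_mk.
have binS n : (i < n)%N ->
    i.+1%:R * 'C(n, i.+1)%:R = (n%:R - i%:R) * 'C(n, i)%:R :> R.
  by move=> lt_in; rewrite -!natrM mul_bin_left natrM natrB // ltnW.
rewrite /hyp_weight -(subnSK lt_ik) exprS !natrM.
transitivity (('C(k, i)%:R * (k%:R - i%:R)) * ('C(m, i)%:R * (m%:R - i%:R))
               * x ^+ (k - i.+1) * x / i.+1%:R); last by ring.
rewrite ![_%:R * (_ - _)]mulrC -!binS //.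
by field; rewrite addrC natr1 pnatr_eq0.
Qed.

Lemma sum_hyp_weight_shift x k m T : (m <= k)%N ->
  \sum_(i < m.+1) hyp_weight x k m i * (x * i%:R * T i)
  = \sum_(i < m.+1)
      hyp_weight x k m i * ((k%:R - i%:R) * (m%:R - i%:R) / i.+1%:R * T i.+1).
Proof.
move=> le_mk; rewrite big_ord_recl big_ord_recr /= subrr !(mulr0, mul0r).
rewrite add0r addr0; apply: eq_bigr => i _ /=.
rewrite /bump add1n mulrA [_ * (x * _)]mulrC hyp_weight_recurrence //.
by rewrite [_ / _ * _]mulrC !mulrA.
Qed.

Section PositivityCriterion.

Variables (x a : R) (k m : nat) (c T : nat -> R).
Hypotheses (le_mk : (m <= k)%N) (x_gt0 : 0 < x) (a_gt0 : 0 < a).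

Let N i := a * i.+1%:R * c i + (k%:R - i%:R) * (m%:R - i%:R) * T i.+1
           - x * i%:R * i.+1%:R * T i.

Hypotheses (N_ge0 : forall i, (i < m)%N -> 0 <= N i) (N_gt0 : 0 < N m).

Lemma hyp_weight_sum_gt0 : 0 < \sum_(i < m.+1) hyp_weight x k m i * c i.
Proof.
have termE i : a * (hyp_weight x k m i * c i)
    + hyp_weight x k m i * ((k%:R - i%:R) * (m%:R - i%:R) / i.+1%:R * T i.+1)
    - hyp_weight x k m i * (x * i%:R * T i)
  = hyp_weight x k m i * N i / i.+1%:R.
  by rewrite /N; field; rewrite addrC natr1 pnatr_eq0.
rewrite -(pmulr_rgt0 _ a_gt0) mulr_sumr.
set telescope := \sum_(i < m.+1) hyp_weight x k m i * (x * i%:R * T i).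
rewrite -[X in 0 < X](addrK telescope).
rewrite [X in _ + X - _]sum_hyp_weight_shift // -big_split -sumrB.
rewrite (eq_bigr _ (fun (i : 'I_m.+1) _ => termE i)) big_ord_recr /=.
apply: ltr_wpDl.
  apply: sumr_ge0 => i _.
  by rewrite divr_ge0 // mulr_ge0 ?N_ge0 // hyp_weight_ge0 // ltW.
have W_gt0 : 0 < hyp_weight x k m m.
  by rewrite mulr_gt0 ?exprn_gt0 // ltr0n muln_gt0 !bin_gt0 le_mk leqnn.
by rewrite divr_gt0 ?ltr0n // mulr_gt0.
Qed.

End PositivityCriterion.

End HypergeometricWeights.

Section QuarticCertificates.

Variable R : realFieldType.
Implicit Types i j e : R.

Definition Ncoef0 i j e := i^+4 + 2*i^+3*j + 3*i^+3*e + i^+3 - 2*i^+2*j^+2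
  + 2*i^+2*j + 3*i^+2*e - 5*i*j^+2 - 3*i*j*e + 3*j^+4 + 3*j^+3*e - 6*j^+3
  - 6*j^+2*e.

Definition Ncoef1 i j e := i^+4 + 2*i^+3*j + 4*i^+3*e + i^+3 + 3*i^+2*j*e
  + 2*i^+2*j + 4*i^+2*e - i*j^+2 + 2*i*j*e + j^+4 + j^+3*e - 2*j^+3 - 2*j^+2*e.

(* On each region, a positive multiple of the polynomial is written as a
   combination with nonnegative coefficients of products of the quantities the
   region makes nonnegative. *)
Lemma Ncoef0_ge0_le i j e : 0 <= j -> j <= i ->
  3 <= e -> e <= i + j -> 4 <= i + j -> 0 <= Ncoef0 i j e.
Proof.
move=> h1 h2 h3 h4 h5.
have [*] : [/\ 0 <= i - j, 0 <= e - 3, 0 <= i + j - e & 0 <= i + j - 4].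
  by split; lra.
rewrite -(pmulr_rge0 _ (_ : 0 < 4)) //.
have -> : 4 * Ncoef0 i j e =
  288 + 96 * (e-3) * (i+j-4) + 352 * (i+j-4) + 96 * (e-3)
    + 72 * (i-j) * (e-3) + 376 * (i-j) + 18 * (i-j) * (e-3) * (i+j-4)
    + 148 * (i-j)^+2 + 36 * (i-j)^+2 * (e-3) + 4 * (i-j)^+2 * (i+j-4)^+2
    + 118 * (i-j) * (i+j-4) + 138 * (i+j-4)^+2 + 30 * (e-3) * (i+j-4)^+2
    + 24 * j * (i-j)^+2 + 53 * (i-j)^+2 * (i+j-4)
    + 9 * (i-j)^+2 * (e-3) * (i+j-4) + 2 * (i-j) * (i+j-4)^+2
    + 3 * (e-3) * (i+j-4)^+3 + 6 * j * (i-j)^+2 * (i+j-4) + 17 * (i+j-4)^+3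
    + 2 * j * (i+j-4)^+3.
  by rewrite /Ncoef0; ring.
by nonneg_poly.
Qed.

Lemma Ncoef0_ge0_ge i j e : 0 <= i -> 2 * i <= j ->
  3 <= e -> e <= i + j -> 4 <= i + j -> 0 <= Ncoef0 i j e.
Proof.
move=> h1 h2 h3 h4 h5.
have [*] : [/\ 0 <= j - 2 * i, 0 <= e - 3, 0 <= i + j - e & 0 <= i + j - 4].
  by split; lra.
rewrite -(pmulr_rge0 _ (_ : 0 < 9)) //.
have -> : 9 * Ncoef0 i j e =
  86 * (i+j-4)^+3 + 81 * (e-3) * (i+j-4)^+2 + 920 * (i+j-4)
    + 120 * (j-2*i) * (i+j-4)^+2 + 10 * (j-2*i) * (i+j-4)^+3
    + 9 * (j-2*i) * (e-3) * (i+j-4)^+2 + 101 * (j-2*i)^+2 * (i+j-4)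
    + 36 * (j-2*i)^+2 * (e-3) + 8 * (j-2*i)^+3 + 399 * (j-2*i) * (i+j-4)
    + 45 * (j-2*i) * (e-3) * (i+j-4) + 244 * (j-2*i)^+2
    + 2 * (j-2*i)^+3 * (i+j-4) + 5 * (i+j-4)^+4 + 9 * (e-3) * (i+j-4)^+3
    + 9 * (j-2*i)^+2 * (e-3) * (i+j-4) + 471 * (i+j-4)^+2
    + 36 * (j-2*i) * (e-3) + 10 * (j-2*i)^+2 * (i+j-4)^+2 + 368
    + 144 * (e-3) + 316 * (j-2*i) + 216 * (e-3) * (i+j-4).
  by rewrite /Ncoef0; ring.
by nonneg_poly.
Qed.

Lemma Ncoef0_ge0_mid i j e : i <= j -> j <= 2 * i ->
  3 <= e -> e <= i + j -> 4 <= i + j -> 0 <= Ncoef0 i j e.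
Proof.
move=> h1 h2 h3 h4 h5.
have [*] : [/\ 0 <= j - i, 0 <= 2 * i - j, 0 <= e - 3, 0 <= i + j - e & 0 <= i + j - 4].
  by split; lra.
rewrite -(pmulr_rge0 _ (_ : 0 < 6)) //.
have -> : 6 * Ncoef0 i j e =
  36 * (j-i) * (e-3) + 31 * (e-3) * (i+j-4)^+2
    + 6 * (2*i-j)^+2 * (e-3) * (i+j-4) + 2 * (j-i) * (2*i-j)^+2 * (i+j-4)
    + 48 * (i+j-4) + 3 * (e-3) * (i+j-4)^+3 + 33 * (j-i) * (e-3) * (i+j-4)
    + 88 * (e-3) * (i+j-4) + 52 * (j-i) + 24 * (2*i-j)^+2 * (e-3)
    + 108 * (2*i-j)^+2 + 6 * (2*i-j)^+2 * (i+j-4)^+2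
    + 10 * (j-i) * (i+j-4)^+3 + 9 * (j-i) * (e-3) * (i+j-4)^+2 + 48 * (e-3)
    + 132 * (j-i) * (i+j-4)^+2 + 62 * (2*i-j)^+2 * (i+j-4)
    + 8 * (j-i) * (2*i-j)^+2 + 12 * (i+j-4)^+2
    + 8 * (2*i-j) * (i+j-e) * (i+j-4) + 345 * (j-i) * (i+j-4)
    + 99 * (j-i)^+2.
  by rewrite /Ncoef0; ring.
by nonneg_poly.
Qed.

Lemma Ncoef1_ge0_le i j e : 0 <= j -> j <= i ->
  3 <= e -> e <= i + j -> 4 <= i + j -> 0 <= Ncoef1 i j e.
Proof.
move=> h1 h2 h3 h4 h5.
have [*] : [/\ 0 <= i - j, 0 <= e - 3, 0 <= i + j - e & 0 <= i + j - 4].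
  by split; lra.
rewrite -(pmulr_rge0 _ (_ : 0 < 4)) //.
have -> : 4 * Ncoef1 i j e =
  1216 + (i+j-4)^+4 + 928 * (i+j-4) + 224 * (e-3) * (i+j-4) + 592 * (i-j)
    + 60 * (i-j) * (e-3) * (i+j-4) + 96 * (i-j)^+2 + 24 * (i-j)^+2 * (e-3)
    + 2 * (i-j)^+2 * (i+j-4)^+2 + 276 * (i-j) * (i+j-4) + (i-j) * (i+j-4)^+3
    + 32 * (i-j)^+2 * (i+j-4) + 6 * (i-j)^+2 * (e-3) * (i+j-4)
    + 8 * j * (i-j)^+2 + 2 * j * (i-j)^+2 * (i+j-4) + 252 * (i+j-4)^+2
    + 320 * (e-3) + 36 * (i-j) * (i+j-4)^+2 + 6 * (i-j) * (e-3) * (i+j-4)^+2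
    + 28 * (i+j-4)^+3 + 4 * (e-3) * (i+j-4)^+3 + 144 * (i-j) * (e-3)
    + 52 * (e-3) * (i+j-4)^+2.
  by rewrite /Ncoef1; ring.
by nonneg_poly.
Qed.

Lemma Ncoef1_ge0_ge i j e : 0 <= i -> i <= j ->
  3 <= e -> e <= i + j -> 4 <= i + j -> 0 <= Ncoef1 i j e.
Proof.
move=> h1 h2 h3 h4 h5.
have [*] : [/\ 0 <= j - i, 0 <= e - 3, 0 <= i + j - e & 0 <= i + j - 4].
  by split; lra.
rewrite -(pmulr_rge0 _ (_ : 0 < 8)) //.
have -> : 8 * Ncoef1 i j e =
  24 * (i+j-4)^+2 + 72 * (j-i)^+2 + 148 * i^+2 * (i+j-4) + 48 * (i+j-4)
    + 8 * (j-i)^+3 + 32 * (j-i) * (i+j-e) + 2 * (j-i)^+3 * (i+j-4)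
    + 10 * (j-i)^+2 * (e-3) * (i+j-4) + 128 * i * (e-3)
    + 24 * (j-i)^+2 * (e-3) + 4 * (j-i)^+2 * (i+j-4)^+2
    + 12 * i * (e-3) * (i+j-4)^+2 + 96 * i^+2 * (e-3)
    + 2 * (j-i) * (i+j-e) * (i+j-4)^+2 + 3 * (i+j-4)^+3
    + 8 * i^+2 * (i+j-4)^+2 + 43 * (j-i)^+2 * (i+j-4) + 608 * i^+2
    + 8 * i^+2 * (e-3) * (i+j-4) + 80 * i * (e-3) * (i+j-4)
    + 16 * (j-i) * (i+j-e) * (i+j-4).
  by rewrite /Ncoef1; ring.
by nonneg_poly.
Qed.

Lemma Ncoef0_ge0 i j e : 0 <= i -> 0 <= j ->
  3 <= e -> e <= i + j -> 4 <= i + j -> 0 <= Ncoef0 i j e.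
Proof.
move=> i_ge0 j_ge0 e_ge3 le_e ij_ge4.
have [le_ji|lt_ij] := lerP j i; first exact: Ncoef0_ge0_le.
have [le_2ij|lt_j2i] := lerP (2 * i) j; first exact: Ncoef0_ge0_ge.
by apply: Ncoef0_ge0_mid; rewrite // ltW.
Qed.

Lemma Ncoef1_ge0 i j e : 0 <= i -> 0 <= j ->
  3 <= e -> e <= i + j -> 4 <= i + j -> 0 <= Ncoef1 i j e.
Proof.
move=> i_ge0 j_ge0 e_ge3 le_e ij_ge4.
have [le_ji|lt_ij] := lerP j i; first exact: Ncoef1_ge0_le.
by apply: Ncoef1_ge0_ge; rewrite // ltW.
Qed.

(* N_i of [hyp_weight_sum_gt0] for a = 2 m x and T_i = (x-1) m + 2 i, written
   with j = m - i and e = k - m. *)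
Definition Npoly x i j e :=
  2 * (i + j) * x * (i + 1) * (i * (x + 1) - (i + j + e))
  + (j + e) * j * ((x - 1) * (i + j) + 2 * (i + 1))
  - x * i * (i + 1) * ((x - 1) * (i + j) + 2 * i).

Lemma Npoly_expand x i j e : let y := (i + j) * (x - 1) - 3 * e in
  (i + j)^+2 * Npoly x i j e
  = e * Ncoef0 i j e + Ncoef1 i j e * y + (i^+3 + i^+2*j + i^+2 + i*j) * y^+2.
Proof. by rewrite /Npoly /Ncoef0 /Ncoef1; ring. Qed.

Lemma Npoly_ge0 x i j e : 0 <= i -> 0 <= j -> 3 <= e -> e <= i + j ->
  4 <= i + j -> 3 * e <= (i + j) * (x - 1) -> 0 <= Npoly x i j e.
Proof.
move=> i_ge0 j_ge0 e_ge3 le_e ij_ge4 le_y.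
have ij2_gt0 : 0 < (i + j)^+2 by rewrite exprn_gt0 //; lra.
rewrite -(pmulr_rge0 _ ij2_gt0).
have y_ge0 : 0 <= (i + j) * (x - 1) - 3 * e by rewrite subr_ge0.
rewrite Npoly_expand; apply: addr_ge0; first apply: addr_ge0.
- by rewrite mulr_ge0 ?Ncoef0_ge0 //; lra.
- by rewrite mulr_ge0 ?Ncoef1_ge0.
- by rewrite mulr_ge0 ?exprn_ge0 // !addr_ge0 ?mulr_ge0 ?exprn_ge0.
Qed.

End QuarticCertificates.

Section HypergeometricGap.

Variable R : realFieldType.
Implicit Types x : R.

Definition hyp_gap x (k m : nat) :=
  \sum_(i < m.+1) hyp_weight x k m i * (i%:R * (x + 1) - k%:R).

Lemma hyp_pgf_gap d k x : (d - k < k)%N ->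
  x * (k%:R * (hyp_pgf R d k).[x] - (x + 1) * (hyp_pgf R d k)^`().[x])
  = ('C(d, k)%:R)^-1 * hyp_gap x k (d - k).
Proof.
move=> lt_mk.
rewrite /hyp_pgf derivZ !hornerZ raddf_sum !horner_sum /hyp_gap.
set c := ('C(d, k)%:R)^-1.
have -> P D : x * (k%:R * (c * P) - (x + 1) * (c * D))
    = c * (x * (k%:R * P) - x * ((x + 1) * D)) :> R by ring.
congr (_ * _).
rewrite !mulr_sumr -sumrB; apply: eq_bigr => i _.
rewrite /= derivZ !hornerZ derivXn hornerMn !hornerXn /hyp_weight.
have lt_ik : (i < k)%N := leq_trans (ltn_ord i) lt_mk.
have k_i : (k - i.+1).+1%:R = k%:R - i%:R :> R by rewrite subnSK // natrB // ltnW.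
rewrite -(subnSK lt_ik) exprS -[_ *+ _.+1]mulr_natr k_i.
ring.
Qed.

Lemma hyp_gap_gt0 x k m : (4 <= m)%N -> (m + 3 <= k)%N -> (k <= 2 * m)%N ->
  3 * (k%:R - m%:R) <= m%:R * (x - 1) -> 0 < hyp_gap x k m.
Proof.
move=> m_ge4 le_mk le_k2m le_x.
have m_ge4R : 4 <= m%:R :> R by rewrite ler_nat.
have e_ge3 : 3 <= k%:R - m%:R :> R by rewrite -natrB ?ler_nat; lia.
have e_le : k%:R - m%:R <= m%:R :> R by rewrite lerBlDr -natrD ler_nat; lia.
have x_gt1 : 1 < x by nra.
apply: (hyp_weight_sum_gt0 (a := 2 * m%:R * x)
  (c := fun i => i%:R * (x + 1) - k%:R) (T := fun i => (x - 1) * m%:R + 2 * i%:R)).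
- lia.
- lra.
- rewrite !mulr_gt0 ?ltr0n //; [lia | lra].
- move=> i lt_im /=.
  have -> : 2 * m%:R * x * i.+1%:R * (i%:R * (x + 1) - k%:R)
      + (k%:R - i%:R) * (m%:R - i%:R) * ((x - 1) * m%:R + 2 * i.+1%:R)
      - x * i%:R * i.+1%:R * ((x - 1) * m%:R + 2 * i%:R)
    = Npoly x i%:R (m%:R - i%:R) (k%:R - m%:R).
    by rewrite /Npoly -natr1; ring.
  have le_im : i%:R <= m%:R :> R by rewrite ler_nat ltnW.
  apply: Npoly_ge0; rewrite ?ler0n ?subr_ge0 //; by [lra | nra].
- rewrite /= subrr !(mul0r, mulr0) addr0.
  have -> : 2 * m%:R * x * m.+1%:R * (m%:R * (x + 1) - k%:R)
      - x * m%:R * m.+1%:R * ((x - 1) * m%:R + 2 * m%:R)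
    = m%:R * x * m.+1%:R * (m%:R * (x - 1) - 2 * (k%:R - m%:R)) by ring.
  rewrite !mulr_gt0 ?ltr0n //; [lia | lra | lra].
Qed.

Lemma hyp_gap_6_3_gt0 x : 4 <= x -> 0 < hyp_gap x 6 3.
Proof.
move=> x_ge4.
have -> : hyp_gap x 6 3 = 12 * x^+3 * (x^+3 - 10 * x - 5).
  rewrite /hyp_gap !big_ord_recr big_ord0 /hyp_weight /=.
  rewrite (_ : 'C(6, 0) * 'C(3, 0) = 1)%N // (_ : 'C(6, 1) * 'C(3, 1) = 18)%N //.
  rewrite (_ : 'C(6, 2) * 'C(3, 2) = 45)%N // (_ : 'C(6, 3) * 'C(3, 3) = 20)%N //.
  ring.
have x3_gt0 : 0 < x ^+ 3 by rewrite exprn_gt0 //; lra.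
rewrite !mulr_gt0 //; nra.
Qed.

End HypergeometricGap.

Theorem lemma13 (R : realFieldType) (d k : nat) (x : R) :
  (9 <= d)%N ->
  (d + 2 < 2 * k)%N ->
  (3 * k <= 2 * d)%N ->
  (5 * k%:R - 2 * d%:R) / (d%:R - k%:R) <= x ->
  (x + 1) * (hyp_pgf R d k)^`().[x] < k%:R * (hyp_pgf R d k).[x].
Proof.
move=> d_ge9 lt_d2k le_3k2d x_ge.
have lt_kd : (k < d)%N by lia.
have m_gt0 : (0 < d - k)%N by lia.
have e_ge3 : 3 <= k%:R - (d - k)%:R :> R by rewrite -natrB ?ler_nat; lia.
have le_x : 3 * (k%:R - (d - k)%:R) <= (d - k)%:R * (x - 1).
  move: x_ge; rewrite natrB ?(ltnW lt_kd) // ler_pdivrMr; last first.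
    by rewrite subr_gt0 ltr_nat.
  by lra.
have x_gt0 : 0 < x.
  have : 0 < (d - k)%:R :> R by rewrite ltr0n.
  by nra.
have gap_gt0 : 0 < hyp_gap x k (d - k).
  have [m3 | m_ge4] : (d - k = 3 \/ 4 <= d - k)%N by lia.
  - have k6 : k = 6%N by lia.
    rewrite m3 k6 in le_x *; apply: hyp_gap_6_3_gt0; lra.
  - by apply: hyp_gap_gt0 => //; lia.
rewrite -subr_gt0 -(pmulr_rgt0 _ x_gt0) hyp_pgf_gap; last by lia.
by rewrite mulr_gt0 // invr_gt0 ltr0n bin_gt0 ltnW.
Qed.
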